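(* The $\mathbf k$-linear map $\varphi:\mathrm{WCQSym}\to\mathrm{QSym}$ defined on the basis by $\varphi(M_\alpha)=(-1)^{\ell_\varepsilon(\alpha)}M_{\bar\alpha}$ if $\alpha\in\mathcal C_N$ and $\varphi(M_\alpha)=0$ if $\alpha\in\mathcal C_\varepsilon$ is a surjective Hopf algebra homomorphism.
   Context: $\mathbf{k}$ is a commutative ring containing $\mathbb{Q}$. $\tilde{\mathbb N}=\mathbb N\cup\{\varepsilon\}$ with $0+\varepsilon=\varepsilon+\varepsilon=\varepsilon$ and $n+\varepsilon=n$ for integers $n\ge1$. $\mathbf{k}[[X]]_{\tilde{\mathbb N}}$, $X=\{x_1<x_2<\cdots\}$, is the algebra of possibly infinite linear combinations of formal monomials $\prod x_i^{f(x_i)}$, $f$ finitely supported $\tilde{\mathbb N}$-valued, $x^0=1$, multiplied by adding exponents in $\tilde{\mathbb N}$. An $\tilde{\mathbb N}$-composition is a finite (possibly empty) sequence $\alpha=(\alpha_1,\dots,\alpha_k)$ of elements of $\{\varepsilon,1,2,\dots\}$, $\ell(\alpha)=k$; $M_\alpha=\sum_{1\le i_1<\cdots<i_k}x_{i_1}^{\alpha_1}\cdots x_{i_k}^{\alpha_k}$, $M_\emptyset=1$. $\mathrm{WCQSym}$ is the $\mathbf k$-span of the (linearly independent) $M_\alpha$; it is a Hopf algebra with the power series product, coproduct $\Delta(M_{(\alpha_1,\dots,\alpha_k)})=\sum_{i=0}^kM_{(\alpha_1,\dots,\alpha_i)}\otimes M_{(\alpha_{i+1},\dots,\alpha_k)}$,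 counit $\epsilon(M_\alpha)=\delta_{\alpha,\emptyset}$, and antipode $S(M_\alpha)=(-1)^{\ell(\alpha)}\sum_{J\models\ell(\alpha)}M_{J\circ\alpha^r}$ (here $\alpha^r$ is the reversal, and for $J=(j_1,\dots,j_l)$ a sequence of positive integers summing to $\ell(\gamma)$, $J\circ\gamma$ sums consecutive blocks of $\gamma$ of sizes $j_1,\dots,j_l$ in $\tilde{\mathbb N}$). $\mathrm{QSym}$ is the span of the $M_\alpha$ with all entries positive integers, a Hopf algebra with the same formulas. $\ell_\varepsilon(\alpha)$ is the number of entries equal to $\varepsilon$; $\bar\alpha$ is $\alpha$ with its $\varepsilon$ entries deleted. $\mathcal C_\varepsilon$ is the set of $\tilde{\mathbb N}$-compositions whose first entry is $\varepsilon$; $\mathcal C_N$ is the set of all other $\tilde{\mathbb N}$-compositions (the empty one and those whose first entry is a positive integer). *)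

From HB Require Import structures.
From mathcomp Require Import all_boot all_algebra finmap.
From mathcomp Require Import monalg.

Set Implicit Arguments.
Unset Strict Implicit.
Unset Printing Implicit Defensive.

Import GRing.Theory.
Local Open Scope ring_scope.

(* The letters {eps, 1, 2, ...} of N~ (the nonzero elements of N~).     *)
(* [Pos n] stands for the positive integer n+1.                        *)
Inductive eN := Eps | Pos of nat.

Definition eN_to (x : eN) : option nat :=
  match x with Eps => None | Pos n => Some n end.
Definition eN_of (o : option nat) : eN :=
  match o with None => Eps | Some n => Pos n end.
Lemma eN_toK : cancel eN_to eN_of. Proof. by case. Qed.
HB.instance Definition _ := Countable.copy eN (can_type eN_toK).

Definition eadd (x y : eN) : eN :=
  match x, y with
  | Eps, Eps => Eps
  | Eps, Pos n => Pos n
  | Pos m, Eps => Pos m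
  | Pos m, Pos n => Pos (m + n).+1
  end.

Notation comp := (seq eN).

(* Quasi-shuffle (stuffle) of two compositions, as a list with
   multiplicities: M_u * M_v = sum_{w in qsh u v} M_w for the power series
   product (equal exponents on a common variable add up in N~). *)
Fixpoint qsh (u : comp) : comp -> seq comp :=
  match u with
  | [::] => fun v => [:: v]
  | a :: u' =>
      fix qsh_u (v : comp) : seq comp :=
        match v with
        | [::] => [:: a :: u']
        | b :: v' =>
            [seq a :: w | w <- qsh u' v] ++
            [seq b :: w | w <- qsh_u v'] ++
            [seq eadd a b :: w | w <- qsh u' v']
        end
  end.

Fixpoint words (k : nat) (A : seq nat) : seq (seq nat) :=
  match k with
  | 0 => [:: [::]]
  | k'.+1 => [seq a :: w | a <- A, w <- words k' A]
  end.
Definition comps (n : nat) : seq (seq nat) :=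
  [seq J <- flatten [seq words l (iota 1 n) | l <- iota 0 n.+1] | sumn J == n].

Definition bsum (g : comp) : eN :=
  match g with [::] => Eps | x :: xs => foldl eadd x xs end.

Fixpoint blocks (J : seq nat) (g : comp) : comp :=
  match J with
  | [::] => [::]
  | j :: J' => bsum (take j g) :: blocks J' (drop j g)
  end.

Section Hopf.
Variable k : comUnitRingType.

(* WCQSym, as the free k-module on the basis (M_alpha)_alpha. *)
Definition WC := {malg k[comp]}.
(* WCQSym (x) WCQSym, free on pairs (M_alpha (x) M_beta). *)
Definition WC2 := {malg k[(comp * comp)%type]}.

Definition M (a : comp) : WC := << a >>.
Definition M2 (a b : comp) : WC2 := << (a, b) >>.

Definition lin (K : choiceType) (V : lmodType k) (f : K -> V)
  (x : {malg k[K]}) : V :=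
  \sum_(a <- msupp x) x@_a *: f a.

Definition bilin (K1 K2 : choiceType) (V : lmodType k) (f : K1 -> K2 -> V)
  (x : {malg k[K1]}) (y : {malg k[K2]}) : V :=
  \sum_(a <- msupp x) \sum_(b <- msupp y) (x@_a * y@_b) *: f a b.

(* Product, unit, coproduct, counit, antipode of WCQSym (and, by
   restriction, of QSym). *)
Definition wmul (x y : WC) : WC :=
  bilin (fun a b => \sum_(c <- qsh a b) M c) x y.
Definition wunit : WC := M [::].
Definition tens (x y : WC) : WC2 := bilin M2 x y.
Definition wcop (x : WC) : WC2 :=
  lin (fun a : comp => \sum_(i < (size a).+1) M2 (take i a) (drop i a)) x.
Definition wcounit (x : WC) : k := x@_[::].
Definition wanti (x : WC) : WC :=
  lin (fun a : comp =>
         (-1) ^+ size a *: \sum_(J <- comps (size a)) M (blocks J (rev a))) x.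

Definition in_QSym (x : WC) : Prop :=
  forall a, a \in msupp x -> Eps \notin a.

Definition phi_basis (a : comp) : WC :=
  match a with
  | Eps :: _ => 0                                   (* alpha in C_eps *)
  | _ => (-1) ^+ count_mem Eps a *: M [seq e <- a | e != Eps]
  end.
Definition phi (x : WC) : WC := lin phi_basis x.

Definition phi2 (x : WC2) : WC2 :=
  lin (fun p : comp * comp => tens (phi (M p.1)) (phi (M p.2))) x.

End Hopf.

From Pilot Require Import Defs.
From HB Require Import structures.
From mathcomp Require Import all_boot all_algebra finmap.
From mathcomp Require Import monalg.

(* Let L_a be the operator M_w |-> M_(a w) ([mcons a]) and psi the map
   M_w |-> (-1)^(l_eps w) M_(w bar) ([erase_eps]); then phi o L_eps = 0 and
   phi o L_n = L_n o psi for n positive.  The product obeys the quasi-shuffle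
   recursion
     L_a X * L_b Y = L_a (X * L_b Y) + L_b (L_a X * Y) + L_(a+b) (X * Y),
   and induction along it shows that psi is multiplicative; phi inherits this
   because the terms starting with eps cancel in pairs.  Similarly
   Delta (L_a X) = 1 (x) L_a X + (L_a (x) id) (Delta X) gives
   (psi (x) phi) o Delta = Delta o psi, and then (phi (x) phi) o Delta =
   Delta o phi.  The antipode is S M_w = (-1)^l(w) T (w^r), where T b is the
   sum of the M_(J o b); since T (a b) = L_a (T b) + H_a (T b), with H_a adding
   a to the first letter ([merge_head a]), induction gives phi (T b) = T (b bar)
   unless b ends with eps, in which case phi (T b) = 0.  Finally phi is the
   identity on QSym, hence onto. *)

Set Implicit Arguments.
Unset Strict Implicit.
Unset Printing Implicit Defensive.
Import GRing.Theory.

(** * Blocks and compositions *)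

Lemma eaddA : associative eadd.
Proof. by case=> [|m] [|n] [|p] //=; rewrite addSn addnS addnA. Qed.

Lemma bsum_cons x y s : bsum (x :: y :: s) = eadd x (bsum (y :: s)).
Proof. by rewrite /=; elim: s x y => [|z s IHs] x y //=; rewrite -eaddA IHs. Qed.

Lemma mem_words l (A : seq nat) w :
  (w \in words l A) = (size w == l) && all (mem A) w.
Proof.
elim: l w => [|l IHl] [|a w] //=; first by apply/allpairsP => -[[b w'] /= []].
rewrite eqSS; apply/allpairsP/and3P => [[[b w'] /= [Ab + [-> ->]]] | [wl Aa Aw]].
  by rewrite IHl => /andP[wl Aw].
by exists (a, w); rewrite /= IHl wl Aw.
Qed.

Lemma words_uniq l (A : seq nat) : uniq A -> uniq (words l A).
Proof.
move=> uA; elim: l => [|l IHl] //=.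
by apply: allpairs_uniq => // -[a w] [b w'] _ _ [-> ->].
Qed.

Lemma mem_comps n J : (J \in comps n) = all (leq 1) J && (sumn J == n).
Proof.
rewrite mem_filter andbC; case: eqP => [<- | _]; rewrite ?andbF ?andbT //.
have sizeJ (s : seq nat) : all (leq 1) s -> size s <= sumn s.
  by elim: s => //= j s IHs /andP[j_gt0 /IHs]; rewrite -add1n; apply: leq_add.
have memJ (s : seq nat) j : j \in s -> j <= sumn s.
  elim: s => //= j' s IHs; rewrite inE => /predU1P[-> | /IHs]; first exact: leq_addr.
  by move/leq_trans; apply; apply: leq_addl.
apply/flattenP/idP => [[_ /mapP[l _ ->]] | posJ].
  rewrite mem_words => /andP[_ /allP JA]; apply/allP => j Jj.
  have : j \in iota 1 (sumn J) := JA j Jj.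
  by rewrite mem_iota => /andP[].
exists (words (size J) (iota 1 (sumn J))).
  by apply/mapP; exists (size J); rewrite // mem_iota ltnS sizeJ.
rewrite mem_words eqxx; apply/allP => j Jj /=.
by rewrite mem_iota (allP posJ) //= add1n ltnS memJ.
Qed.

Lemma comps_uniq n : uniq (comps n).
Proof.
apply: filter_uniq; elim: (iota 0 n.+1) (iota_uniq 0 n.+1) => //= l ls IHls /andP[lls uls].
rewrite cat_uniq words_uniq ?iota_uniq ?IHls // andbT.
apply/hasPn => w /flattenP[_ /mapP[l' l'ls ->]]; rewrite !mem_words => /andP[/eqP -> _].
by apply: contraNN lls => /andP[/eqP <- _].
Qed.

Definition succ_head (J : seq nat) := if J is j :: J' then j.+1 :: J' else [::].

Lemma perm_comps_succ n :
  perm_eq (comps n.+1)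
    ([seq 1%N :: J | J <- comps n] ++ [seq succ_head J | J <- comps n & J != [::]]).
Proof.
apply: uniq_perm; first exact: comps_uniq.
  rewrite cat_uniq map_inj_uniq ?comps_uniq //=; last by move=> J J' [].
  rewrite map_inj_in_uniq ?(filter_uniq _ (comps_uniq n)) ?andbT; last first.
    by move=> [|j J] [|j' J']; rewrite !mem_filter //= => _ _ [-> ->].
  apply/hasPn => _ /mapP[[|j J] + ->]; rewrite mem_filter //= mem_comps.
  by case/andP=> /andP[j_gt0 _] _; apply/mapP => -[J' _ [j0]]; rewrite j0 in j_gt0.
move=> [|[|[|j]] J]; rewrite mem_cat mem_comps /=.
- by apply/esym/norP; split; apply/mapP => -[[|? ?]]; rewrite ?mem_filter.
- by apply/esym/norP; split; apply/mapP => -[[|? ?]]; rewrite ?mem_filter.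
- have -> : (1 :: J \in [seq succ_head J0 | J0 <- comps n & J0 != [::]]) = false.
    by apply/mapP => -[[|[|?] ?]] //; rewrite mem_filter mem_comps.
  by rewrite orbF mem_map ?mem_comps ?add1n // => ? ? [].
- have -> : (j.+2 :: J \in [seq 1%N :: J0 | J0 <- comps n]) = false.
    by apply/mapP => -[].
  rewrite addSn eqSS -[_ && _]/(all (leq 1) (j.+1 :: J) && (sumn (j.+1 :: J) == n)).
  rewrite -mem_comps; apply/idP/mapP => [Jn | [[|j' J'] //]].
    by exists (j.+1 :: J); rewrite // mem_filter Jn.
  by rewrite mem_filter => /andP[_ Jn] [-> ->].
Qed.

Local Open Scope ring_scope.

(** * Linear extension from a basis *)

Section FreeModule.
Variable k : comUnitRingType.

Section Linear.
Variables (K : choiceType) (V : lmodType k).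

Lemma linEw (f : K -> V) (x : {malg k[K]}) (d : {fset K}) :
  (msupp x `<=` d)%fset -> lin f x = \sum_(a <- d) x@_a *: f a.
Proof.
move=> le_xd; rewrite /lin (big_fset_incl _ le_xd) // => a _ /mcoeff_outdom ->.
by rewrite scale0r.
Qed.

Lemma lin_is_linear (f : K -> V) : linear (lin f).
Proof.
move=> c x y; pose d := (msupp x `|` msupp y `|` msupp (c *: x + y))%fset.
have le_xd : (msupp x `<=` d)%fset by rewrite /d -fsetUA fsubsetUl.
have le_yd : (msupp y `<=` d)%fset by rewrite /d fsubsetU // fsubsetUr.
have le_cxyd : (msupp (c *: x + y) `<=` d)%fset by rewrite fsubsetUr.
rewrite (linEw f le_xd) (linEw f le_yd) (linEw f le_cxyd).
rewrite scaler_sumr -big_split /=; apply: eq_bigr => a _.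
by rewrite mcoeffD mcoeffZ scalerDl scalerA.
Qed.

HB.instance Definition _ (f : K -> V) :=
  GRing.isLinear.Build k {malg k[K]} V *:%R (lin f) (lin_is_linear f).

Lemma linU (f : K -> V) a : lin f << a >> = f a.
Proof. by rewrite /lin msuppU oner_eq0 big_seq_fset1 mcoeffUU scale1r. Qed.

(* A locked copy of [lin]: conversion must never unfold the operators built
   from it, since that computes with finitely supported functions. *)
Fact mlin_key : unit. Proof. exact: tt. Qed.
Definition mlin (f : K -> V) : {malg k[K]} -> V := locked_with mlin_key (lin f).

Lemma mlinE (f : K -> V) : mlin f = lin f.
Proof. exact: locked_withE. Qed.

Lemma mlin_is_linear (f : K -> V) : linear (mlin f).
Proof. by rewrite mlinE; apply: lin_is_linear. Qed.

HB.instance Definition _ (f : K -> V) :=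
  GRing.isLinear.Build k {malg k[K]} V *:%R (mlin f) (mlin_is_linear f).

Lemma mlinU (f : K -> V) a : mlin f << a >> = f a.
Proof. by rewrite mlinE linU. Qed.

Lemma malgUZ (c : k) (a : K) : << c *g a >> = c *: << a >> :> {malg k[K]}.
Proof. by apply/malgP => b; rewrite mcoeffZ !mcoeffU mulr_natr. Qed.

Lemma eq_linear_malg (F G : {linear {malg k[K]} -> V}) :
  (forall a, F << a >> = G << a >>) -> F =1 G.
Proof.
move=> eqFG x; rewrite (monalgE x) !linear_sum; apply: eq_bigr => a _.
by rewrite malgUZ !linearZ eqFG.
Qed.

End Linear.

Section Bilinear.
Variables (K1 K2 : choiceType) (V : lmodType k).

Lemma bilin_is_bilinear (f : K1 -> K2 -> V) : bilinear_for *:%R *:%R (bilin f).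
Proof.
split=> [y | x] c u v.
  have linl z : bilin f z y = lin (fun a => lin (f a) y) z.
    by apply: eq_bigr => a _; rewrite scaler_sumr; apply: eq_bigr => b _; rewrite scalerA.
  by rewrite !linl linearP.
have linr z : bilin f x z = lin (fun b => lin (f^~ b) x) z.
  rewrite /bilin /lin exchange_big; apply: eq_bigr => b _; rewrite scaler_sumr.
  by apply: eq_bigr => a _; rewrite scalerA mulrC.
by rewrite !linr linearP.
Qed.

HB.instance Definition _ (f : K1 -> K2 -> V) :=
  bilinear_isBilinear.Build k {malg k[K1]} {malg k[K2]} V *:%R *:%R (bilin f)
    (bilin_is_bilinear f).

HB.instance Definition _ (f : K1 -> K2 -> V) x :=
  GRing.isLinear.Build k {malg k[K2]} V *:%R (bilin f x) ((bilin_is_bilinear f).2 x).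

Lemma bilinU (f : K1 -> K2 -> V) a b : bilin f << a >> << b >> = f a b.
Proof.
by rewrite /bilin !msuppU !oner_eq0 !big_seq_fset1 !mcoeffUU mulr1 scale1r.
Qed.

End Bilinear.
End FreeModule.

HB.instance Definition _ (k : comUnitRingType) := GRing.Linear.copy (@phi k) (lin _).
HB.instance Definition _ (k : comUnitRingType) := GRing.Linear.copy (@phi2 k) (lin _).
HB.instance Definition _ (k : comUnitRingType) := GRing.Linear.copy (@wcop k) (lin _).
HB.instance Definition _ (k : comUnitRingType) := GRing.Linear.copy (@wanti k) (lin _).
HB.instance Definition _ (k : comUnitRingType) := Bilinear.copy (@wmul k) (bilin _).
HB.instance Definition _ (k : comUnitRingType) := Bilinear.copy (@tens k) (bilin _).
HB.instance Definition _ (k : comUnitRingType) x :=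
  GRing.Linear.copy (@wmul k x) (bilin _ x).
HB.instance Definition _ (k : comUnitRingType) x :=
  GRing.Linear.copy (@tens k x) (bilin _ x).


Section WCQSym.
Variable k : comUnitRingType.
Local Notation W := (WC k).
Local Notation phi := (@phi k).
Local Notation wmul := (@wmul k).
Local Notation tens := (@tens k).
Local Notation wcop := (@wcop k).
Local Notation phi2 := (@phi2 k).
Local Notation wanti := (@wanti k).

(* Locked for the same reason as [mlin]. *)
Fact mbasis_key : unit. Proof. exact: tt. Qed.
Definition mbasis : seq eN -> W := locked_with mbasis_key (M k).
Local Notation M := mbasis.

Lemma mbasisE w : M w = Defs.M k w.
Proof. by rewrite /M locked_withE. Qed.

Lemma linM (V : lmodType k) (f : seq eN -> V) w : lin f (M w) = f w.
Proof. by rewrite mbasisE linU. Qed.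

Lemma mlinM (V : lmodType k) (f : seq eN -> V) w : mlin f (M w) = f w.
Proof. by rewrite mbasisE mlinU. Qed.

Lemma eq_linear_WC (V : lmodType k) (F G : {linear W -> V}) :
  (forall w, F (M w) = G (M w)) -> F =1 G.
Proof. by move=> eqFG; apply: eq_linear_malg => w; have := eqFG w; rewrite mbasisE. Qed.

Definition mcons (a : eN) : W -> W := mlin (fun w => M (a :: w)).
HB.instance Definition _ a := GRing.Linear.copy (mcons a) (mlin _).

Definition erase_eps : W -> W :=
  mlin (fun w => (-1) ^+ count_mem Eps w *: M [seq e <- w | e != Eps]).
HB.instance Definition _ := GRing.Linear.copy erase_eps (mlin _).

Lemma mconsM a w : mcons a (M w) = M (a :: w).
Proof. exact: mlinM. Qed.

Lemma erase_epsM w :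
  erase_eps (M w) = (-1) ^+ count_mem Eps w *: M [seq e <- w | e != Eps].
Proof. exact: mlinM. Qed.

Lemma erase_epsM_nil : erase_eps (M [::]) = M [::].
Proof. by rewrite erase_epsM scale1r. Qed.

Lemma erase_eps_mcons_eps X : erase_eps (mcons Eps X) = - erase_eps X.
Proof.
move: X; apply: (eq_linear_WC (F := erase_eps \o mcons Eps) (G := -%R \o erase_eps)) => w.
by rewrite /= mconsM !erase_epsM exprS mulN1r scaleNr.
Qed.

Lemma erase_eps_mcons_pos n X : erase_eps (mcons (Pos n) X) = mcons (Pos n) (erase_eps X).
Proof.
move: X; apply: (eq_linear_WC (F := erase_eps \o mcons _) (G := mcons _ \o erase_eps)) => w.
by rewrite /= mconsM !erase_epsM linearZ /= mconsM.
Qed.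

Lemma phiM w : phi (M w) = if w is Eps :: _ then 0 else erase_eps (M w).
Proof. by rewrite /phi linM erase_epsM mbasisE; case: w => [|[|n] w]. Qed.

Lemma phiM_nil : phi (M [::]) = M [::].
Proof. by rewrite phiM erase_epsM_nil. Qed.

Lemma phiM_eps w : phi (M (Eps :: w)) = 0.
Proof. by rewrite phiM. Qed.

Lemma phi_mcons_eps X : phi (mcons Eps X) = 0.
Proof.
move: X; apply: (eq_linear_WC (F := phi \o mcons Eps) (G := \0)) => w.
by rewrite /= mconsM phiM.
Qed.

Lemma phi_mcons_pos n X : phi (mcons (Pos n) X) = mcons (Pos n) (erase_eps X).
Proof.
move: X; apply: (eq_linear_WC (F := phi \o mcons _) (G := mcons _ \o erase_eps)) => w.
by rewrite /= mconsM phiM -mconsM erase_eps_mcons_pos.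
Qed.

(** * The product *)

Lemma wmulM u v : wmul (M u) (M v) = \sum_(c <- qsh u v) M c.
Proof. by rewrite !mbasisE /Defs.wmul bilinU; apply: eq_bigr => c _; rewrite mbasisE. Qed.

Lemma wmul1r y : wmul (M [::]) y = y.
Proof.
move: y; apply: (eq_linear_WC (F := wmul (M [::])) (G := idfun)) => v /=.
by rewrite wmulM big_seq1.
Qed.

Lemma wmulr1 x : wmul x (M [::]) = x.
Proof.
move: x; apply: (eq_linear_WC (F := applyr wmul (M [::])) (G := idfun)) => u.
by rewrite /= wmulM; case: u => [|a u]; rewrite big_seq1.
Qed.

Lemma wmulM_cons a u b v :
  wmul (M (a :: u)) (M (b :: v)) =
  mcons a (wmul (M u) (M (b :: v))) + mcons b (wmul (M (a :: u)) (M v))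
  + mcons (eadd a b) (wmul (M u) (M v)).
Proof.
rewrite !wmulM !linear_sum /= !big_cat !big_map -addrA.
by congr (_ + (_ + _)); apply: eq_bigr => c _; rewrite mconsM.
Qed.

Lemma wmul_mcons a b X Y :
  wmul (mcons a X) (mcons b Y) =
  mcons a (wmul X (mcons b Y)) + mcons b (wmul (mcons a X) Y) + mcons (eadd a b) (wmul X Y).
Proof.
move: X; apply: (eq_linear_WC (F := applyr wmul (mcons b Y) \o mcons a)
  (G := (mcons a \o applyr wmul (mcons b Y)) \+ (mcons b \o (applyr wmul Y \o mcons a))
        \+ (mcons (eadd a b) \o applyr wmul Y))) => u /=.
move: Y; apply: (eq_linear_WC (F := wmul (mcons a (M u)) \o mcons b)
  (G := (mcons a \o (wmul (M u) \o mcons b)) \+ (mcons b \o wmul (mcons a (M u)))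
        \+ (mcons (eadd a b) \o wmul (M u)))) => v /=.
by rewrite !mconsM wmulM_cons.
Qed.

Lemma wmul_morph_basis (f : {linear W -> W}) :
  (forall u v, f (wmul (M u) (M v)) = wmul (f (M u)) (f (M v))) ->
  forall x y, f (wmul x y) = wmul (f x) (f y).
Proof.
move=> fM x y; move: x.
apply: (eq_linear_WC (F := f \o applyr wmul y) (G := applyr wmul (f y) \o f)) => u /=.
by move: y; apply: (eq_linear_WC (F := f \o wmul (M u)) (G := wmul (f (M u)) \o f)) => v /=.
Qed.

Lemma erase_epsM_eps w : erase_eps (M (Eps :: w)) = - erase_eps (M w).
Proof. by rewrite -mconsM erase_eps_mcons_eps. Qed.

Lemma erase_epsM_pos n w : erase_eps (M (Pos n :: w)) = mcons (Pos n) (erase_eps (M w)).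
Proof. by rewrite -mconsM erase_eps_mcons_pos. Qed.

Lemma erase_eps_wmulM u v :
  erase_eps (wmul (M u) (M v)) = wmul (erase_eps (M u)) (erase_eps (M v)).
Proof.
elim: u v => [|a u IHu] v; first by rewrite wmul1r erase_epsM_nil wmul1r.
elim: v => [|b v IHv]; first by rewrite wmulr1 erase_epsM_nil wmulr1.
rewrite wmulM_cons !linearD /=.
case: a IHv => [|m] IHv; case: b => [|n] /=.
- rewrite !erase_eps_mcons_eps !IHu IHv !erase_epsM_eps !linearNl !linearNr /= !opprK.
  by rewrite -addrA subrr addr0.
- rewrite erase_eps_mcons_eps !erase_eps_mcons_pos !IHu IHv erase_epsM_eps erase_epsM_pos.
  by rewrite !linearNl /= -addrA -linearD addNr linear0 addr0.
- rewrite erase_eps_mcons_eps !erase_eps_mcons_pos !IHu IHv erase_epsM_eps erase_epsM_pos.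
  by rewrite !linearNr /= addrAC -linearD addNr linear0 add0r.
- by rewrite !erase_eps_mcons_pos !IHu IHv !erase_epsM_pos wmul_mcons.
Qed.

Lemma erase_eps_wmul x y : erase_eps (wmul x y) = wmul (erase_eps x) (erase_eps y).
Proof. by apply: wmul_morph_basis; apply: erase_eps_wmulM. Qed.

Lemma phi_wmulM u v : phi (wmul (M u) (M v)) = wmul (phi (M u)) (phi (M v)).
Proof.
case: u => [|a u]; first by rewrite wmul1r phiM_nil wmul1r.
case: v => [|b v]; first by rewrite wmulr1 phiM_nil wmulr1.
rewrite wmulM_cons !linearD -!(mconsM a) -!(mconsM b).
case: a => [|m]; case: b => [|n] /=.
- by rewrite !phi_mcons_eps linear0l !addr0.
- rewrite !phi_mcons_eps !phi_mcons_pos !erase_eps_wmul erase_eps_mcons_eps linear0l add0r.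
  by rewrite linearNl /= -linearD addNr linear0.
- rewrite !phi_mcons_eps !phi_mcons_pos !erase_eps_wmul erase_eps_mcons_eps linear0r addr0.
  by rewrite linearNr /= -linearD addNr linear0.
- by rewrite !phi_mcons_pos !erase_eps_wmul !erase_eps_mcons_pos wmul_mcons.
Qed.

Lemma phi_wmul x y : phi (wmul x y) = wmul (phi x) (phi y).
Proof. by apply: wmul_morph_basis; apply: phi_wmulM. Qed.

(** * The coproduct and the counit *)

Fact mbasis2_key : unit. Proof. exact: tt. Qed.
Definition mbasis2 : seq eN -> seq eN -> WC2 k := locked_with mbasis2_key (M2 k).
Local Notation M2 := mbasis2.

Lemma mbasis2E u v : M2 u v = Defs.M2 k u v.
Proof. by rewrite /M2 locked_withE. Qed.

Lemma linM2 (V : lmodType k) (f : seq eN * seq eN -> V) u v : lin f (M2 u v) = f (u, v).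
Proof. by rewrite mbasis2E linU. Qed.

Lemma mlinM2 (V : lmodType k) (f : seq eN * seq eN -> V) u v : mlin f (M2 u v) = f (u, v).
Proof. by rewrite mbasis2E mlinU. Qed.

Lemma eq_linear_WC2 (V : lmodType k) (F G : {linear WC2 k -> V}) :
  (forall u v, F (M2 u v) = G (M2 u v)) -> F =1 G.
Proof.
by move=> eqFG; apply: eq_linear_malg => -[u v]; have := eqFG u v; rewrite mbasis2E.
Qed.

Definition mconsl (a : eN) : WC2 k -> WC2 k := mlin (fun p => M2 (a :: p.1) p.2).
HB.instance Definition _ a := GRing.Linear.copy (mconsl a) (mlin _).

Definition erase_eps_phi : WC2 k -> WC2 k :=
  mlin (fun p => tens (erase_eps (M p.1)) (phi (M p.2))).
HB.instance Definition _ := GRing.Linear.copy erase_eps_phi (mlin _).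

Lemma mconslM a u v : mconsl a (M2 u v) = M2 (a :: u) v.
Proof. exact: mlinM2. Qed.

Lemma erase_eps_phiM u v : erase_eps_phi (M2 u v) = tens (erase_eps (M u)) (phi (M v)).
Proof. exact: mlinM2. Qed.

Lemma tensM u v : tens (M u) (M v) = M2 u v.
Proof. by rewrite !mbasisE mbasis2E /Defs.tens bilinU. Qed.

Lemma phi2M u v : phi2 (M2 u v) = tens (phi (M u)) (phi (M v)).
Proof. by rewrite /phi2 linM2 !mbasisE. Qed.

Lemma wcopM w : wcop (M w) = \sum_(i < (size w).+1) M2 (take i w) (drop i w).
Proof. by rewrite /wcop linM; apply: eq_bigr => i _; rewrite mbasis2E. Qed.

Lemma wcopM_nil : wcop (M [::]) = M2 [::] [::].
Proof. by rewrite wcopM big_ord1. Qed.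

Lemma wcopM_cons a w : wcop (M (a :: w)) = M2 [::] (a :: w) + mconsl a (wcop (M w)).
Proof.
rewrite !wcopM big_ord_recl linear_sum; congr (_ + _).
by apply: eq_bigr => i _ /=; rewrite mconslM.
Qed.

Lemma tens_mcons a X Y : tens (mcons a X) Y = mconsl a (tens X Y).
Proof.
move: X; apply: (eq_linear_WC (F := applyr tens Y \o mcons a)
  (G := mconsl a \o applyr tens Y)) => u /=.
move: Y; apply: (eq_linear_WC (F := tens (mcons a (M u)))
  (G := mconsl a \o tens (M u))) => v /=.
by rewrite mconsM !tensM mconslM.
Qed.

Lemma wcop_mcons a Y : wcop (mcons a Y) = tens (M [::]) (mcons a Y) + mconsl a (wcop Y).
Proof.
move: Y; apply: (eq_linear_WC (F := wcop \o mcons a)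
  (G := (tens (M [::]) \o mcons a) \+ (mconsl a \o wcop))) => w /=.
by rewrite mconsM wcopM_cons tensM.
Qed.

Lemma erase_eps_phi_mconsl_eps Z : erase_eps_phi (mconsl Eps Z) = - erase_eps_phi Z.
Proof.
move: Z; apply: (eq_linear_WC2 (F := erase_eps_phi \o mconsl Eps)
  (G := -%R \o erase_eps_phi)).
by move=> u v /=; rewrite mconslM !erase_eps_phiM -mconsM erase_eps_mcons_eps linearNl.
Qed.

Lemma erase_eps_phi_mconsl_pos n Z :
  erase_eps_phi (mconsl (Pos n) Z) = mconsl (Pos n) (erase_eps_phi Z).
Proof.
move: Z; apply: (eq_linear_WC2 (F := erase_eps_phi \o mconsl _)
  (G := mconsl _ \o erase_eps_phi)).
by move=> u v /=; rewrite mconslM !erase_eps_phiM -mconsM erase_eps_mcons_pos tens_mcons.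
Qed.

Lemma phi2_mconsl_eps Z : phi2 (mconsl Eps Z) = 0.
Proof.
move: Z; apply: (eq_linear_WC2 (F := phi2 \o mconsl Eps) (G := \0)) => u v /=.
by rewrite mconslM phi2M -mconsM phi_mcons_eps linear0l.
Qed.

Lemma phi2_mconsl_pos n Z : phi2 (mconsl (Pos n) Z) = mconsl (Pos n) (erase_eps_phi Z).
Proof.
move: Z; apply: (eq_linear_WC2 (F := phi2 \o mconsl _) (G := mconsl _ \o erase_eps_phi)).
by move=> u v /=; rewrite mconslM phi2M erase_eps_phiM -mconsM phi_mcons_pos tens_mcons.
Qed.

Lemma erase_eps_phi_wcopM w : erase_eps_phi (wcop (M w)) = wcop (erase_eps (M w)).
Proof.
elim: w => [|[|n] w IHw].
- by rewrite wcopM_nil erase_eps_phiM erase_epsM_nil phiM_nil tensM wcopM_nil.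
- rewrite wcopM_cons linearD /= erase_eps_phi_mconsl_eps IHw erase_eps_phiM.
  by rewrite phiM_eps linear0r add0r erase_epsM_eps linearN.
- rewrite wcopM_cons linearD /= erase_eps_phi_mconsl_pos IHw erase_eps_phiM.
  by rewrite phiM erase_epsM_nil erase_epsM_pos wcop_mcons.
Qed.

Lemma phi2_wcopM w : phi2 (wcop (M w)) = wcop (phi (M w)).
Proof.
case: w => [|[|n] w].
- by rewrite wcopM_nil phi2M phiM_nil tensM wcopM_nil.
- by rewrite wcopM_cons linearD /= phi2_mconsl_eps phi2M phiM_eps linear0r addr0 linear0.
- rewrite wcopM_cons linearD /= phi2_mconsl_pos erase_eps_phi_wcopM phi2M phiM_nil.
  by rewrite -mconsM phi_mcons_pos wcop_mcons.
Qed.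

Lemma phi2_wcop x : phi2 (wcop x) = wcop (phi x).
Proof.
move: x; apply: (eq_linear_WC (F := phi2 \o wcop) (G := wcop \o phi)) => w /=.
exact: phi2_wcopM.
Qed.

Lemma mcoeffM w w' : (M w)@_w' = (w == w')%:R.
Proof. by rewrite mbasisE mcoeffU. Qed.

Lemma wcounit_phi x : wcounit (phi x) = wcounit x.
Proof.
rewrite /wcounit (monalgE x) linear_sum !raddf_sum; apply: eq_bigr => a _ /=.
rewrite malgUZ linearZ /= !mcoeffZ -[<< a >>]/(Defs.M k a) -mbasisE; congr (_ * _).
case: a => [|[|n] w]; first by rewrite phiM_nil.
  by rewrite phiM_eps mcoeff0 mcoeffM.
by rewrite phiM erase_epsM mcoeffZ !mcoeffM mulr0.
Qed.

Lemma in_QSym_lin (f : seq eN -> W) x : (forall a, in_QSym (f a)) -> in_QSym (lin f x).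
Proof.
move=> Qf; rewrite /lin; elim/big_rec: _ => [|a y _ Qy] b; first by rewrite msupp0.
case/(fsubsetP (msuppD_le _ _))/fsetUP => [/(fsubsetP (msuppZ_le _ _))|]; last exact: Qy.
exact: Qf.
Qed.

Lemma phi_in_QSym x : in_QSym (phi x).
Proof.
apply: in_QSym_lin => -[|[|n] w] b /=; rewrite ?msupp0 //.
all: move/(fsubsetP (msuppZ_le _ _)); rewrite msuppU oner_eq0 => /fset1P -> //=.
by rewrite inE mem_filter eqxx.
Qed.

Lemma erase_epsM_noeps w : Eps \notin w -> erase_eps (M w) = M w.
Proof.
move=> w_noeps; rewrite erase_epsM (count_memPn w_noeps) scale1r.
by congr M; apply/all_filterP/allP => e ew; apply: contraNneq w_noeps => <-.
Qed.

Lemma phiM_noeps w : Eps \notin w -> phi (M w) = M w.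
Proof.
move=> w_noeps; rewrite phiM erase_epsM_noeps //.
by case: w w_noeps => [|[|n] w] //; rewrite inE eqxx.
Qed.

Lemma phi_id_QSym y : in_QSym y -> phi y = y.
Proof.
move=> Qy; rewrite [RHS](monalgE y) [in phi y](monalgE y) linear_sum.
apply: eq_big_seq => a /Qy.
by rewrite malgUZ linearZ /= -[<< a >>]/(Defs.M k a) -mbasisE => /phiM_noeps ->.
Qed.

(** * The antipode *)

Definition coarsenings (b : seq eN) : W := \sum_(J <- comps (size b)) M (blocks J b).

Definition merge_head (a : eN) : W -> W :=
  mlin (fun w => if w is b :: w' then M (eadd a b :: w') else 0).
HB.instance Definition _ a := GRing.Linear.copy (merge_head a) (mlin _).

Definition nil_part : W -> W := mlin (fun w => if w is [::] then M [::] else 0).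
HB.instance Definition _ := GRing.Linear.copy nil_part (mlin _).

Definition eps_part : W -> W := mlin (fun w => if w is Eps :: _ then M w else 0).
HB.instance Definition _ := GRing.Linear.copy eps_part (mlin _).

Lemma merge_headM a w :
  merge_head a (M w) = if w is b :: w' then M (eadd a b :: w') else 0.
Proof. exact: mlinM. Qed.

Lemma nil_partM w : nil_part (M w) = if w is [::] then M [::] else 0.
Proof. exact: mlinM. Qed.

Lemma eps_partM w : eps_part (M w) = if w is Eps :: _ then M w else 0.
Proof. exact: mlinM. Qed.

Lemma wantiM w : wanti (M w) = (-1) ^+ size w *: coarsenings (rev w).
Proof.
rewrite /wanti linM /coarsenings size_rev; congr (_ *: _).
by apply: eq_bigr => J _; rewrite mbasisE.
Qed.

Lemma coarsenings_nil : coarsenings [::] = M [::].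
Proof. by rewrite /coarsenings (_ : comps 0 = [:: [::]]) // big_seq1. Qed.

Lemma coarsenings_cons a b :
  coarsenings (a :: b) = mcons a (coarsenings b) + merge_head a (coarsenings b).
Proof.
rewrite /coarsenings (perm_big _ (perm_comps_succ _)) big_cat !big_map !linear_sum /=.
congr (_ + _); first by apply: eq_bigr => J _; rewrite take0 drop0 mconsM.
rewrite big_filter big_mkcond; apply: eq_big_seq => -[|j J]; rewrite merge_headM // mem_comps.
case/andP=> /andP[j_gt0 _] /eqP sizeb.
case: j j_gt0 sizeb => // j _; case: b => // c b _ /=.
by congr (M (_ :: _)); apply: bsum_cons.
Qed.

Lemma merge_head_mcons a b Z : merge_head a (mcons b Z) = mcons (eadd a b) Z.
Proof.
move: Z; apply: (eq_linear_WC (F := merge_head a \o mcons b) (G := mcons (eadd a b))) => w /=.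
by rewrite !mconsM merge_headM.
Qed.

Lemma nil_part_coarsenings_cons a b : nil_part (coarsenings (a :: b)) = 0.
Proof.
by rewrite linear_sum big1_seq // => -[|j J] /=; rewrite nil_partM // mem_comps.
Qed.

Lemma erase_eps_split Y : erase_eps Y = phi Y + erase_eps (eps_part Y).
Proof.
move: Y; apply: (eq_linear_WC (F := erase_eps) (G := phi \+ (erase_eps \o eps_part))) => w /=.
by rewrite eps_partM phiM; case: w => [|[|n] w]; rewrite ?linear0 ?addr0 ?add0r.
Qed.

Lemma phi_merge_head_eps Y : phi (merge_head Eps Y) = phi Y - nil_part Y.
Proof.
move: Y; apply: (eq_linear_WC (F := phi \o merge_head Eps) (G := phi \- nil_part)) => w /=.
rewrite merge_headM nil_partM; case: w => [|a w]; first by rewrite linear0 phiM_nil subrr.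
by rewrite subr0; case: a.
Qed.

Lemma phi_merge_head_pos n Y :
  phi (merge_head (Pos n) Y) =
  merge_head (Pos n) (phi Y) - mcons (Pos n) (erase_eps (eps_part Y)).
Proof.
move: Y; apply: (eq_linear_WC (F := phi \o merge_head (Pos n))
  (G := (merge_head (Pos n) \o phi) \- (mcons (Pos n) \o (erase_eps \o eps_part)))) => w /=.
rewrite merge_headM eps_partM; case: w => [|[|m] w] /=.
- by rewrite !linear0 phiM_nil merge_headM addr0.
- by rewrite phiM_eps linear0 add0r erase_epsM_eps linearN opprK -mconsM phi_mcons_pos.
- by rewrite !linear0 addr0 -!mconsM !phi_mcons_pos merge_head_mcons.
Qed.

Lemma phi_coarsenings b :
  phi (coarsenings b) =
  if (b == [::]) || (last Eps b != Eps) then coarsenings [seq e <- b | e != Eps] else 0.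
Proof.
elim: b => [|x b IHb]; first by rewrite coarsenings_nil phiM_nil.
case: b IHb => [|y b] IHb.
  rewrite coarsenings_cons coarsenings_nil merge_headM mconsM addr0.
  case: x => [|n]; first by rewrite phiM_eps.
  rewrite -mconsM phi_mcons_pos erase_epsM_nil /= coarsenings_cons coarsenings_nil.
  by rewrite merge_headM addr0.
rewrite [_ || _]/= coarsenings_cons linearD /=; case: x => [|n].
  by rewrite phi_mcons_eps add0r phi_merge_head_eps nil_part_coarsenings_cons subr0.
rewrite phi_mcons_pos phi_merge_head_pos (erase_eps_split (coarsenings _)) linearD /=.
rewrite addrACA subrr addr0 IHb /=; case: ifP => _; last by rewrite !linear0 addr0.
by rewrite [in RHS]coarsenings_cons.
Qed.

Lemma phi_wantiM w : phi (wanti (M w)) = wanti (phi (M w)).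
Proof.
rewrite wantiM linearZ /= phi_coarsenings.
case: w => [|[|n] w]; first by rewrite phiM_nil wantiM.
  rewrite rev_cons last_rcons eqxx orbF phiM_eps linear0.
  by case: (rev w) => [|? ?]; rewrite scaler0.
have -> : last Eps (rev (Pos n :: w)) = Pos n by rewrite rev_cons last_rcons.
rewrite orbT phiM erase_epsM linearZ /= wantiM scalerA -exprD filter_rev.
by rewrite /= add0n addnS size_filter count_predC.
Qed.

Lemma phi_wanti x : phi (wanti x) = wanti (phi x).
Proof.
move: x; apply: (eq_linear_WC (F := phi \o wanti) (G := wanti \o phi)) => w /=.
exact: phi_wantiM.
Qed.

End WCQSym.

Theorem theorem3p8 (k : comUnitRingType)
  (hQ : forall n : nat, (n.+1)%:R \is a @GRing.unit k) :
  (* phi takes values in QSym and is onto QSym *)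
  (forall x : WC k, in_QSym (phi x)) /\
  (forall y : WC k, in_QSym y -> exists x : WC k, phi x = y) /\
  (* algebra morphism *)
  (forall x y : WC k, phi (wmul x y) = wmul (phi x) (phi y)) /\
  phi (wunit k) = wunit k /\
  (* coalgebra morphism *)
  (forall x : WC k, phi2 (wcop x) = wcop (phi x)) /\
  (forall x : WC k, wcounit (phi x) = wcounit x) /\
  (* compatibility with the antipodes *)
  (forall x : WC k, phi (wanti x) = wanti (phi x)).
Proof.
split; first exact: phi_in_QSym.
split; first by move=> y /phi_id_QSym; exists y.
split; first exact: phi_wmul.
split; first by rewrite /wunit -mbasisE phiM_nil.
split; first exact: phi2_wcop.
split; first exact: wcounit_phi.
exact: phi_wanti.
Qed.
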